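(* Let $p$ be a prime, $n\ge 2$ and $1\le m\le n-1$ integers. For any real $\alpha$ with $\min\{m,n-m\}<\alpha\le m(n-m)$, there exists a subset $G\subset G(n,n-m)$ with $|G|\approx p^{\alpha}$ such that the following holds for every $E\subset\mathbb{F}_p^n$, writing $|E|=p^{s}$: (1) if $|E|\le p^m$ and $t\in(0,s]$, then $|\{W\in G:\ |\pi^W(E)|\le p^t\}|\lesssim |G|\,p^{t-s}$; (2) if $|E|>p^m$, then for every small $\varepsilon>0$, $|\{W\in G:\ |\pi^W(E)|\le \varepsilon p^m\}|\lesssim |G|\,\varepsilon$.
   Context: $\mathbb{F}_p$ is the field with $p$ elements. $G(n,k)$ denotes the set of all $k$-dimensional linear subspaces of $\mathbb{F}_p^n$. For a nontrivial subspace $W$ and $E\subset\mathbb{F}_p^n$, $\pi^{W}(E)=\{x+W:\ E\cap(x+W)\neq\emptyset,\ x\in\mathbb{F}_p^n\}$ is the set of cosets of $W$ meeting $E$. $|J|$ denotes cardinality. $f\lesssim g$ means $f\le Cg$ for a constant $C$ independent of $p$, $E$, $t$, $\varepsilon$ (depending only on $n,m,\alpha$); $f\approx g$ means $f\lesssim g$ and $g\lesssim f$. *)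

From mathcomp Require Import all_boot all_order all_algebra.
From Stdlib Require Import Reals.
Set Implicit Arguments. Unset Strict Implicit. Unset Printing Implicit Defensive.
Import GRing.Theory.

Notation Fpn p n := 'rV['F_p]_n.

Definition coset_of (p n : nat) (W : {vspace Fpn p n}) (x : Fpn p n)
  : {set Fpn p n} := [set y : Fpn p n | (GRing.add y (GRing.opp x)) \in W].

(* pi^W(E) : the set of cosets of W meeting E. *)
Definition proj_cosets (p n : nat) (W : {vspace Fpn p n}) (E : {set Fpn p n})
  : {set {set Fpn p n}} := [set coset_of W x | x in E].

Definition Rleb (x y : R) : bool := if Rle_dec x y then true else false.

(* The graphs W_A = {(u, u A)} of k x m matrices A (k = n - m) are (n - m)-dimensional, and
   Cauchy-Schwarz over the cosets gives |E|^2 <= |pi^{W_A}(E)| e_A(E), where the energy e_A(E)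
   counts the pairs of E lying in a common coset. By Markov's inequality it therefore suffices to
   find about p^alpha matrices whose energies sum to O(|C| (|E|^2 p^-m + |E|)).
   For alpha >= m, take the matrices whose rows are (t_j^(i+1))_j shifted by a fixed U: a nonzero
   x solves x M = y for at most k^m vectors t, since each t_j is a root of a polynomial of
   degree k, and this bounds the energy pair by pair. For alpha > k, transpose this family and
   count on the dual side: by discrete Parseval the energy along W_A is the Fourier mass of E on
   the annihilator of W_A, and the transposed family meets each nonzero frequency at most
   m^k |C| / p^k times. *)

From mathcomp Require Import all_boot all_order all_algebra.
From Stdlib Require Import Reals.
From mathcomp Require Import zify.
From Stdlib Require Import Lra.

Set Implicit Arguments.
Unset Strict Implicit.
Unset Printing Implicit Defensive.
Import GRing.Theory.

Lemma leq_sqr_sum_card (I : finType) (P : {pred I}) (c : I -> nat) :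
  (\sum_(i in P) c i) * (\sum_(i in P) c i) <= #|P| * \sum_(i in P) c i * c i.
Proof.
have sq : (\sum_(i in P) c i) * (\sum_(i in P) c i) =
          \sum_(i in P) \sum_(j in P) c i * c j.
  by rewrite big_distrl; apply: eq_bigr => i _; rewrite big_distrr.
have diag_r : #|P| * \sum_(i in P) c i * c i = \sum_(i in P) \sum_(j in P) c j * c j.
  by rewrite sum_nat_const.
have diag_l : #|P| * \sum_(i in P) c i * c i = \sum_(i in P) \sum_(j in P) c i * c i.
  by rewrite diag_r exchange_big.
rewrite -(leq_pmul2l (isT : 0 < 2)) [X in _ <= X]mul2n -addnn {1}diag_l diag_r.
rewrite sq big_distrr -big_split; apply: leq_sum => i _.
by rewrite big_distrr -big_split; apply: leq_sum => j _; apply: nat_Cauchy.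
Qed.

Definition collisions (T : finType) (U : eqType) (f : T -> U) (A : {set T}) : nat :=
  \sum_(x in A) \sum_(y in A) (f x == f y).

Lemma card_sqr_le_imset_collisions (T U : finType) (f : T -> U) (A : {set T}) :
  #|A| * #|A| <= #|f @: A| * collisions f A.
Proof.
pose c u := \sum_(x in A | f x == u) 1.
have cardA : #|A| = \sum_(u in f @: A) c u.
  by rewrite -sum1_card (partition_big_imset f).
have collE : collisions f A = \sum_(u in f @: A) c u * c u.
  rewrite /collisions (partition_big_imset f) /=; apply: eq_bigr => u _.
  rewrite big_distrl /=; apply: eq_bigr => x /andP[_ /eqP <-].
  by rewrite mul1n /c big_mkcondr /=; apply: eq_bigr => y _; rewrite eq_sym; case: eqP.
by rewrite cardA collE; apply: leq_sqr_sum_card.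
Qed.

Lemma collisions_inj (T : finType) (U : eqType) (f : T -> U) (A : {set T}) :
  injective f -> collisions f A = #|A|.
Proof.
move=> f_inj; rewrite -sum1_card; apply: eq_bigr => x xA.
rewrite (bigD1 x) //= eqxx big1 // => y /andP[_ /negbTE].
by rewrite (inj_eq f_inj) eq_sym => ->.
Qed.

Lemma leq_collisions (T : finType) (U V : eqType) (f : T -> U) (g : T -> V) (A : {set T}) :
  (forall x y, f x = f y -> g x = g y) -> collisions f A <= collisions g A.
Proof.
move=> fg; apply: leq_sum => x _; apply: leq_sum => y _.
by case: eqP => // /fg ->; rewrite eqxx.
Qed.

Lemma sum_nat_count (T : Type) (s : seq T) (P : pred T) : \sum_(x <- s) P x = count P s.
Proof. by rewrite -sum1_count [RHS]big_mkcond /=; apply: eq_bigr => x _; case: (P x). Qed.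

Lemma sum_pred1_mul (T : finType) (a : T) (g : T -> nat) : \sum_x (a == x) * g x = g a.
Proof. by rewrite (bigD1 a) //= eqxx mul1n big1 ?addn0 // => x; rewrite eq_sym => /negbTE ->. Qed.

Section DotProduct.
Local Open Scope ring_scope.
Variable F : finFieldType.

Definition dot d (u v : 'rV[F]_d) : F := (u *m v^T) 0 0.

Lemma dotDl d (u v w : 'rV[F]_d) : dot (u + v) w = dot u w + dot v w.
Proof. by rewrite /dot mulmxDl mxE. Qed.

Lemma dotZl d c (u w : 'rV[F]_d) : dot (c *: u) w = c * dot u w.
Proof. by rewrite /dot -scalemxAl mxE. Qed.

Lemma dotBr d (u v w : 'rV[F]_d) : dot u (v - w) = dot u v - dot u w.
Proof. by rewrite /dot raddfB /= mulmxBr !mxE. Qed.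

Lemma dot0l d (v : 'rV[F]_d) : dot 0 v = 0.
Proof. by rewrite /dot mul0mx mxE. Qed.

Lemma dot0r d (u : 'rV[F]_d) : dot u 0 = 0.
Proof. by rewrite /dot trmx0 mulmx0 mxE. Qed.

Lemma dot_delta d j (v : 'rV[F]_d) : dot (delta_mx 0 j) v = v 0 j.
Proof. by rewrite /dot -rowE !mxE. Qed.

Lemma dot_mulmxr d r (u : 'rV[F]_r) (v : 'rV[F]_d) (B : 'M[F]_(d, r)) :
  dot u (v *m B) = dot (u *m B^T) v.
Proof. by rewrite /dot trmx_mul mulmxA. Qed.

Definition dot_kernel d (z : 'rV[F]_d) : {set 'rV[F]_d} := [set u | dot u z == 0].

Lemma card_dot_kernel d (z : 'rV[F]_d) : z != 0 ->
  (#|F| * #|dot_kernel z| = expn #|F| d)%nat.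
Proof.
move=> /rV0Pn [j zj].
pose u1 := (z 0 j)^-1 *: (delta_mx 0 j : 'rV[F]_d).
have dot_u1 : dot u1 z = 1 by rewrite dotZl dot_delta mulVf.
(* The level sets of [dot _ z] are the [#|F|] translates of its kernel. *)
have level_card c : #|[set u | dot u z == c]| = #|dot_kernel z|.
  rewrite -!sum1_card (reindex_inj (addIr (c *: u1))) /=.
  by apply: eq_bigl => u; rewrite !inE dotDl dotZl dot_u1 mulr1 -subr_eq0 addrK.
have -> : expn #|F| d = #|'rV[F]_d| by rewrite card_mx mul1n.
transitivity (\sum_(c : F) #|[set u : 'rV[F]_d | dot u z == c]|)%nat.
  by rewrite (eq_bigr _ (fun c _ => level_card c)) sum_nat_const.
rewrite -[RHS]sum1_card (partition_big (fun u => dot u z) predT) //=.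
by apply: eq_bigr => c _; rewrite -sum1_card; apply: eq_bigl => u; rewrite inE.
Qed.

Lemma card_dot_kernelB d (v w : 'rV[F]_d) :
  (#|F| * #|dot_kernel (v - w)| = expn #|F| d + (v == w) * (expn #|F| d * #|F|.-1))%nat.
Proof.
have [<-|neq_vw] := eqVneq v w; last by rewrite card_dot_kernel ?subr_eq0 // addn0.
have -> : dot_kernel (v - v) = setT by apply/setP => u; rewrite !inE subrr dot0r eqxx.
have q_gt0 : (0 < #|F|)%nat by apply/card_gt0P; exists 0.
by rewrite cardsT card_mx !mul1n addnC -mulnSr prednK // mulnC.
Qed.

(* Discrete Parseval identity, in counting form. *)
Lemma sum_dot_collisions (T : finType) r (f : T -> 'rV[F]_r) (A : {set T}) :
  (#|F| * \sum_(eta : 'rV[F]_r) collisions (fun x => dot eta (f x)) A =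
   #|A| * #|A| * expn #|F| r + expn #|F| r * #|F|.-1 * collisions f A)%nat.
Proof.
have pair_count x y : (\sum_(eta : 'rV[F]_r) (dot eta (f x) == dot eta (f y)) =
    #|dot_kernel (f x - f y)|)%nat.
  rewrite -sum1_card [RHS]big_mkcond /=; apply: eq_bigr => u _.
  by rewrite inE dotBr subr_eq0; case: eqP.
rewrite /collisions exchange_big big_distrr /= -mulnA -sum_nat_const.
rewrite [X in (_ + X)%nat]big_distrr -big_split /=; apply: eq_bigr => x _.
rewrite exchange_big !big_distrr -sum_nat_const -big_split /=; apply: eq_bigr => y _.
by rewrite pair_count card_dot_kernelB [(expn _ _ * _ * _)%nat]mulnC.
Qed.

End DotProduct.

Section SparseFamily.
Local Open Scope ring_scope.
Variable F : finFieldType.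

Definition moment_poly a (x : 'rV[F]_a.+1) (s : F) : F := \sum_(i < a.+1) x 0 i * s ^+ i.+1.

Lemma card_moment_poly_fiber a (x : 'rV[F]_a.+1) (c : F) : x != 0 ->
  (#|[set s | moment_poly x s == c]| <= a.+1)%nat.
Proof.
move=> /rV0Pn [j xj].
pose Q := \poly_(i < a.+2) (if i is i'.+1 then x 0 (inord i') else - c).
have Q_neq0 : Q != 0.
  apply: contraNneq xj => Q0; move: (congr1 (fun q : {poly F} => q`_j.+1) Q0).
  by rewrite coef_poly coef0 ltnS ltn_ord inord_val => ->.
have hornerQ s : Q.[s] = moment_poly x s - c.
  rewrite horner_poly big_ord_recl /= expr0 mulr1 addrC.
  by congr (_ + _); apply: eq_bigr => i _; rewrite inord_val.
have size_Q : (size Q <= a.+2)%nat by apply: size_poly.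
rewrite -ltnS (leq_trans _ size_Q) // cardE max_poly_roots ?enum_uniq //.
by apply/allP => s; rewrite mem_enum inE => /eqP xs; rewrite /root hornerQ xs subrr.
Qed.

(* Row [0] of [moment_mx t U] is [t] and row [i.+1] is [(t_j ^ (i + 2))_j + row i U], so that
   [x *m moment_mx t U] lists the values [moment_poly x t_j], up to a shift independent of [t]. *)
Definition moment_mx a b (t : 'rV[F]_b) (U : 'M[F]_(a, b)) : 'M[F]_(a.+1, b) :=
  \matrix_(i, j) (t 0 j ^+ i.+1 + (if unlift ord0 i is Some i' then U i' j else 0)).

Lemma moment_mx_inj a b t U t' U' : @moment_mx a b t U = moment_mx t' U' -> t = t' /\ U = U'.
Proof.
move/matrixP => eq_tU; have eq_t : t = t'.
  by apply/rowP => j; move: (eq_tU ord0 j); rewrite !mxE unlift_none !addr0 !expr1.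
split => //; subst t'; apply/matrixP => i j.
by move: (eq_tU (lift ord0 i) j); rewrite !mxE liftK => /addrI.
Qed.

Lemma mul_moment_mx a b (x : 'rV[F]_a.+1) t (U : 'M[F]_(a, b)) j :
  (x *m moment_mx t U) 0 j = moment_poly x (t 0 j) + (x *m moment_mx 0 U) 0 j.
Proof.
rewrite !mxE -big_split /=; apply: eq_bigr => i _.
by rewrite !mxE mulrDr expr0n add0r.
Qed.

Lemma card_moment_mx_solutions a b (x : 'rV[F]_a.+1) (y : 'rV[F]_b) (U : 'M[F]_(a, b)) :
  x != 0 -> (#|[pred t : 'rV[F]_b | x *m moment_mx t U == y]| <= expn a.+1 b)%nat.
Proof.
move=> nz_x.
pose R j := [set s | moment_poly x s == y 0 j - (x *m moment_mx 0 U) 0 j].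
pose coords (t : 'rV[F]_b) := [ffun j => t 0 j].
have coords_inj : injective coords.
  by move=> t t' /ffunP eq_t; apply/rowP => j; move: (eq_t j); rewrite !ffunE.
rewrite -(card_imset _ coords_inj).
apply: leq_trans (_ : (#|finfun.family R| <= _)%nat).
  apply: subset_leq_card; apply/subsetP => f /imsetP [t].
  rewrite inE => /eqP xt ->; apply/familyP => j.
  by rewrite ffunE inE -xt (mul_moment_mx x t) addrK.
rewrite card_family foldrE big_image /= -[b in expn _ b]card_ord -prod_nat_const.
by apply: leq_prod => j _; apply: card_moment_poly_fiber.
Qed.

Lemma sparse_solution_family a b N : (0 < N)%nat -> (N <= expn #|F| (a * b))%nat ->
  exists D : seq 'M[F]_(a.+1, b), [/\ uniq D, size D = (expn #|F| b * N)%nat &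
   forall (x : 'rV[F]_a.+1) (y : 'rV[F]_b), x != 0 ->
     (count (fun M => x *m M == y) D <= expn a.+1 b * N)%nat].
Proof.
move=> N_gt0 N_le; pose Us := take N (enum 'M[F]_(a, b)).
have size_Us : size Us = N by rewrite size_takel // -cardE card_mx.
exists [seq moment_mx t U | U <- Us, t <- enum 'rV[F]_b]; split.
- apply: allpairs_uniq; [exact/take_uniq/enum_uniq | exact: enum_uniq |].
  by move=> [U t] [U' t'] _ _ /= /moment_mx_inj [-> ->].
- by rewrite size_allpairs size_Us -cardE card_mx mul1n mulnC.
move=> x y nz_x; rewrite -size_Us; elim: Us {size_Us} => [|U Us IH] //=.
rewrite count_cat mulnS leq_add // count_map -sum1_count big_enum_cond /= sum1_card.
exact: card_moment_mx_solutions.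
Qed.

End SparseFamily.

Section GraphSpace.
Local Open Scope ring_scope.
Variables (F : finFieldType) (k m : nat).
Implicit Types (A : 'M[F]_(k, m)) (E : {set 'rV[F]_(k + m)}).

(* [graph_space A] is the graph [{(u, u *m A)}] of [A], i.e. the kernel of [graph_mx A]. *)
Definition graph_mx A : 'M[F]_(k + m, m) := col_mx (- A) 1%:M.

Definition graph_form A : 'Hom('rV[F]_(k + m), 'rV[F]_m) := linfun (mulmxr (graph_mx A)).

Definition graph_space A : {vspace 'rV[F]_(k + m)} := lker (graph_form A).

Definition graph_energy A E : nat := collisions (mulmxr (graph_mx A)) E.

Lemma mul_graph_mx A (v : 'rV[F]_(k + m)) : v *m graph_mx A = rsubmx v - lsubmx v *m A.
Proof. by rewrite -{1}(hsubmxK v) mul_row_col mulmx1 mulmxN addrC. Qed.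

Lemma mem_graph_space A (v : 'rV[F]_(k + m)) : (v \in graph_space A) = (v *m graph_mx A == 0).
Proof. by rewrite memv_ker lfunE. Qed.

Lemma dim_graph_space A : \dim (graph_space A) = k.
Proof.
have surj : limg (graph_form A) = fullv.
  apply/vspaceP => w; rewrite memvf; apply/memv_imgP; exists (row_mx 0 w); rewrite ?memvf //.
  by rewrite lfunE /= mul_graph_mx row_mxKl row_mxKr mul0mx subr0.
have := limg_ker_dim (graph_form A) fullv.
by rewrite surj capfv !dimvf !dim_matrix !mul1r => /addIn.
Qed.

Lemma graph_space_inj : injective graph_space.
Proof.
move=> A B eq_AB; apply/row_matrixP => i.
have : row_mx (delta_mx 0 i) (row i A) \in graph_space A.
  by rewrite mem_graph_space mul_graph_mx row_mxKl row_mxKr -rowE subrr.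
by rewrite eq_AB mem_graph_space mul_graph_mx row_mxKl row_mxKr -rowE subr_eq0 => /eqP.
Qed.

Lemma graph_collision_count (C : seq 'M[F]_(k, m)) K (x y : 'rV[F]_(k + m)) :
  (forall (u : 'rV[F]_k) (v : 'rV[F]_m), u != 0 -> (count (fun A => u *m A == v) C <= K)%nat) ->
  (count (fun A => x *m graph_mx A == y *m graph_mx A) C <= (x == y) * size C + K)%nat.
Proof.
move=> sparseC; have [<-|neq_xy] := eqVneq x y.
  by rewrite mul1n (leq_trans (count_size _ _)) ?leq_addr.
set d := x - y; have nz_d : d != 0 by rewrite subr_eq0.
rewrite (eq_count (a2 := fun A => lsubmx d *m A == rsubmx d)); last first.
  by move=> A /=; rewrite -subr_eq0 -mulmxBl mul_graph_mx subr_eq0 eq_sym.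
have [ld0|] := eqVneq (lsubmx d) 0; last exact: sparseC.
rewrite (eq_count (a2 := pred0)) ?count_pred0 // => A /=; rewrite ld0 mul0mx.
by apply: contraNF nz_d => /eqP rd0; rewrite -(hsubmxK d) ld0 -rd0 row_mx0.
Qed.

Lemma sum_graph_energy_le (C : seq 'M[F]_(k, m)) K E :
  (forall (u : 'rV[F]_k) (v : 'rV[F]_m), u != 0 -> (count (fun A => u *m A == v) C <= K)%nat) ->
  (\sum_(A <- C) graph_energy A E <= #|E| * size C + #|E| * #|E| * K)%nat.
Proof.
move=> sparseC.
have diag : (\sum_(x in E) \sum_(y in E) (x == y) = #|E|)%nat.
  exact: (collisions_inj E (@inj_id 'rV[F]_(k + m))).
apply: (@leq_trans (\sum_(x in E) \sum_(y in E) ((x == y) * size C + K))).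
  rewrite exchange_big; apply: leq_sum => x _; rewrite exchange_big; apply: leq_sum => y _.
  by rewrite sum_nat_count; apply: graph_collision_count.
under eq_bigr => x _ do rewrite big_split /= -big_distrl sum_nat_const.
by rewrite big_split /= -big_distrl sum_nat_const diag mulnA.
Qed.

End GraphSpace.

Section FourierExcess.
Local Open Scope ring_scope.
Variables (F : finFieldType) (d : nat) (E : {set 'rV[F]_d}).

(* [fourier_excess psi] is the Fourier mass [\sum_(l != 0) |hat E(l psi)|^2] of [E] on the
   line through [psi], written without characters. *)
Definition fourier_excess (psi : 'rV[F]_d) : nat :=
  (#|F| * collisions (dot psi) E - #|E| * #|E|)%nat.

Lemma card_sqr_le_dot_collisions (psi : 'rV[F]_d) :
  (#|E| * #|E| <= #|F| * collisions (dot psi) E)%nat.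
Proof.
apply: leq_trans (card_sqr_le_imset_collisions (dot psi) E) _.
by rewrite leq_mul2r max_card orbT.
Qed.

Lemma fourier_excess0 : fourier_excess 0 = (#|F|.-1 * (#|E| * #|E|))%nat.
Proof.
rewrite /fourier_excess; have -> : collisions (dot 0) E = (#|E| * #|E|)%nat.
  rewrite -sum_nat_const; apply: eq_bigr => x _.
  by rewrite -sum1_card; apply: eq_bigr => y _; rewrite !dot0l eqxx.
by rewrite -{2}[(#|E| * #|E|)%nat]mul1n -mulnBl subn1.
Qed.

Lemma sum_fourier_excess_mulmx r (B : 'M[F]_(d, r)) :
  (\sum_(eta : 'rV[F]_r) fourier_excess (eta *m B^T) =
   expn #|F| r * #|F|.-1 * collisions (mulmxr B) E)%nat.
Proof.
rewrite sumnB => [|eta _]; last exact: card_sqr_le_dot_collisions.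
rewrite sum_nat_const card_mx mul1n -big_distrr /=.
have -> : \sum_(eta : 'rV[F]_r) collisions (dot (eta *m B^T)) E =
          \sum_(eta : 'rV[F]_r) collisions (fun x => dot eta (mulmxr B x)) E.
  by apply: eq_bigr => eta _; apply: eq_bigr => x _; apply: eq_bigr => y _; rewrite /= !dot_mulmxr.
by rewrite sum_dot_collisions mulnC addKn.
Qed.

Lemma sum_fourier_excess :
  (\sum_(psi : 'rV[F]_d) fourier_excess psi = expn #|F| d * #|F|.-1 * #|E|)%nat.
Proof.
have id_inj : injective (mulmxr 1%:M : 'rV[F]_d -> 'rV[F]_d) by move=> x y; rewrite /= !mulmx1.
rewrite -(collisions_inj E id_inj) -sum_fourier_excess_mulmx.
by apply: eq_bigr => psi _; rewrite trmx1 mulmx1.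
Qed.

End FourierExcess.

Section GraphDual.
Local Open Scope ring_scope.
Variables (F : finFieldType) (k m : nat).

Lemma graph_mx_tr (A : 'M[F]_(k, m)) (eta : 'rV[F]_m) :
  eta *m (graph_mx A)^T = row_mx (- (eta *m A^T)) eta.
Proof. by rewrite /graph_mx tr_col_mx trmx1 linearN /= mul_mx_row mulmx1 mulmxN. Qed.

Lemma sum_graph_mx_tr_eq (A : 'M[F]_(k, m)) (psi : 'rV[F]_(k + m)) :
  (\sum_(eta : 'rV[F]_m) (eta *m (graph_mx A)^T == psi) =
   (- (rsubmx psi *m A^T) == lsubmx psi))%nat.
Proof.
rewrite (bigD1 (rsubmx psi)) //= big1 ?addn0 => [|eta neq_eta]; last first.
  by rewrite graph_mx_tr; case: eqP => // psiE; rewrite -psiE row_mxKr eqxx in neq_eta.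
rewrite graph_mx_tr -{3}(hsubmxK psi).
congr (nat_of_bool _); by apply/eqP/eqP => [/eq_row_mx[] | ->].
Qed.

(* Grouping the pairs [(A, eta)] by the value of [eta *m (graph_mx A)^T]: each nonzero
   value [psi] is hit by at most [K] of them, because [eta = rsubmx psi] is then forced. *)
Lemma sum_graph_dual_le (C : seq 'M[F]_(k, m)) K (f : 'rV[F]_(k + m) -> nat) :
  (forall (z : 'rV[F]_m) (w : 'rV[F]_k), z != 0 -> (count (fun A => z *m A^T == w) C <= K)%nat) ->
  (\sum_(A <- C) \sum_(eta : 'rV[F]_m) f (eta *m (graph_mx A)^T) <=
   f GRing.zero * size C + K * \sum_psi f psi)%nat.
Proof.
move=> sparseC.
pose mult (psi : 'rV[F]_(k + m)) := count (fun A => - (rsubmx psi *m A^T) == lsubmx psi) C.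
have -> : (\sum_(A <- C) \sum_(eta : 'rV[F]_m) f (eta *m (graph_mx A)^T) =
           \sum_psi mult psi * f psi)%nat.
  transitivity (\sum_psi \sum_(A <- C) \sum_(eta : 'rV[F]_m)
                  (eta *m (graph_mx A)^T == psi) * f psi)%nat.
    rewrite [RHS]exchange_big; apply: eq_bigr => A _.
    by rewrite [RHS]exchange_big; apply: eq_bigr => eta _; rewrite sum_pred1_mul.
  apply: eq_bigr => psi _; rewrite /mult -sum_nat_count big_distrl /=.
  by apply: eq_bigr => A _; rewrite -sum_graph_mx_tr_eq big_distrl.
have mult_le psi : psi != 0 -> (mult psi <= K)%nat.
  move=> nz_psi; have [r0|nz_r] := eqVneq (rsubmx psi) 0.
    rewrite /mult (eq_count (a2 := pred0)) ?count_pred0 // => A /=; rewrite r0 mul0mx oppr0.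
    by apply: contraNF nz_psi => /eqP l0; rewrite -(hsubmxK psi) -l0 r0 row_mx0.
  apply: leq_trans (sparseC _ (- lsubmx psi) nz_r); rewrite leq_eqVlt; apply/orP; left.
  by apply/eqP/eq_count => A /=; rewrite eqr_oppLR.
rewrite (bigD1 0) //= big_distrr /=; apply: leq_add.
  by rewrite mulnC leq_mul2l count_size orbT.
apply: (@leq_trans (\sum_(psi | psi != 0) K * f psi)).
  by apply: leq_sum => psi nz_psi; rewrite leq_mul2r mult_le ?orbT.
by rewrite [X in (_ <= X)%nat](bigD1 0) //= leq_addl.
Qed.

Lemma sum_graph_energy_le_dual (C : seq 'M[F]_(k, m)) K (E : {set 'rV[F]_(k + m)}) :
  (1 < #|F|)%nat ->
  (forall (z : 'rV[F]_m) (w : 'rV[F]_k), z != 0 -> (count (fun A => z *m A^T == w) C <= K)%nat) ->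
  (expn #|F| m * \sum_(A <- C) graph_energy A E <=
   size C * (#|E| * #|E|) + K * expn #|F| (k + m) * #|E|)%nat.
Proof.
move=> q_gt1 sparseC.
have q1_gt0 : (0 < #|F|.-1)%nat by rewrite -ltnS prednK // ltnW.
rewrite -(leq_pmul2l q1_gt0).
have := sum_graph_dual_le (fourier_excess E) sparseC.
rewrite (eq_bigr (fun A => expn #|F| m * #|F|.-1 * graph_energy A E)%nat) => [|A _]; last first.
  exact: sum_fourier_excess_mulmx.
rewrite -big_distrr fourier_excess0 sum_fourier_excess /=.
(* Generalizing the atoms keeps [nia] from unfolding [expn] and the sums. *)
move: (\sum_(A <- C) _)%nat #|F|.-1 (expn #|F| m) (expn #|F| (k + m)) #|E| (size C).
by move=> X a b c e s; nia.
Qed.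

End GraphDual.

Section PrimeField.
Local Open Scope ring_scope.
Variables (p : nat) (k m : nat).

Lemma card_sqr_le_proj_energy (A : 'M['F_p]_(k, m)) (E : {set 'rV['F_p]_(k + m)}) :
  (#|E| * #|E| <= #|proj_cosets (graph_space A) E| * graph_energy A E)%nat.
Proof.
apply: leq_trans (card_sqr_le_imset_collisions (coset_of (graph_space A)) E) _.
rewrite leq_mul2l leq_collisions ?orbT // => x y eq_xy.
have : x \in coset_of (graph_space A) x by rewrite inE subrr mem0v.
by rewrite eq_xy inE mem_graph_space mulmxBl subr_eq0 => /eqP.
Qed.

Definition low_energy (c : nat) (C : seq 'M['F_p]_(k, m)) : Prop :=
  forall E : {set 'rV['F_p]_(k + m)},
    (expn p m * \sum_(A <- C) graph_energy A E <=
     c * size C * (#|E| * #|E| + #|E| * expn p m))%nat.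

End PrimeField.

Section LowEnergyFamilies.
Local Open Scope ring_scope.
Variables (p : nat) (k' m' : nat).
Hypothesis p_pr : prime p.
Local Notation k := k'.+1.
Local Notation m := m'.+1.

Let card_Fp_p : #|'F_p| = p := card_Fp p_pr.

Lemma low_energy_direct_family N : (0 < N)%nat -> (N <= expn p (k' * m))%nat ->
  exists C : seq 'M['F_p]_(k, m),
    [/\ uniq C, size C = (expn p m * N)%nat & low_energy (expn k m + expn m k) C].
Proof.
move=> N_gt0; rewrite -[in expn p _]card_Fp_p => N_le.
have [C [uniq_C size_C sparse_C]] := @sparse_solution_family 'F_p k' m N N_gt0 N_le.
rewrite card_Fp_p in size_C; exists C; split => // E.
have := sum_graph_energy_le E sparse_C; rewrite size_C.
have : (0 < expn m k)%nat by rewrite expn_gt0.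
move: (\sum_(A <- C) _)%nat (expn p m) (expn k m) (expn m k) #|E|.
by move=> X P a b e b_gt0 /(leq_mul (leqnn P)); nia.
Qed.

Lemma low_energy_dual_family N : (0 < N)%nat -> (N <= expn p (m' * k))%nat ->
  exists C : seq 'M['F_p]_(k, m),
    [/\ uniq C, size C = (expn p k * N)%nat & low_energy (expn k m + expn m k) C].
Proof.
move=> N_gt0; rewrite -[in expn p _]card_Fp_p => N_le.
have [D [uniq_D size_D sparse_D]] := @sparse_solution_family 'F_p m' k N N_gt0 N_le.
rewrite card_Fp_p in size_D; exists (map trmx D); split.
- by rewrite map_inj_uniq //; apply: trmx_inj.
- by rewrite size_map.
move=> E; have sparse_trD (z : 'rV['F_p]_m) (w : 'rV['F_p]_k) : z != 0 ->
    (count (fun A => z *m A^T == w) (map trmx D) <= expn m k * N)%nat.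
  move=> nz_z; rewrite count_map (eq_count (a2 := fun M => z *m M == w)) ?sparse_D //.
  by move=> M /=; rewrite trmxK.
have q_gt1 : (1 < #|'F_p|)%nat by rewrite card_Fp_p prime_gt1.
have := sum_graph_energy_le_dual E q_gt1 sparse_trD.
rewrite card_Fp_p size_map size_D expnD.
have : (0 < expn k m)%nat by rewrite expn_gt0.
move: (\sum_(A <- _) _)%nat (expn p m) (expn p k) (expn k m) (expn m k) #|E|.
by move=> X P Q a b e; nia.
Qed.

End LowEnergyFamilies.

Section RealCounting.
Local Open Scope R_scope.

Lemma INR_expn a b : INR (expn a b) = INR a ^ b.
Proof. by elim: b => [|b IH] //; rewrite expnS mult_INR IH. Qed.

Lemma INR_addn a b : INR (a + b)%nat = INR a + INR b.
Proof. by rewrite -plusE plus_INR. Qed.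

Lemma INR_muln a b : INR (a * b)%nat = INR a * INR b.
Proof. by rewrite -multE mult_INR. Qed.

Lemma INR_leq a b : (a <= b)%nat -> INR a <= INR b.
Proof. by move/leP; apply: le_INR. Qed.

Lemma count_Rleb_markov (T : Type) (s : seq T) (g h : T -> nat) (b : nat) (lam : R) :
  0 <= lam -> (forall x, b <= g x * h x)%nat ->
  INR (count (fun x => Rleb (INR (g x)) lam) s) * INR b <= lam * INR (\sum_(x <- s) h x).
Proof.
move=> lam_ge0 b_le; elim: s => [|x s IH]; first by rewrite big_nil /=; lra.
rewrite big_cons /= !INR_addn Rmult_plus_distr_r Rmult_plus_distr_l.
apply: Rplus_le_compat IH; have hx_ge0 := pos_INR (h x).
rewrite /Rleb; case: Rle_dec => [gx_le|_] /=; last by nra.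
have := INR_leq (b_le x); rewrite INR_muln; nra.
Qed.

Lemma Rpower_sub_log (a e t : R) : 1 < a -> 0 < e ->
  Rpower a (t - ln e / ln a) = Rpower a t / e.
Proof.
move=> a_gt1 e_gt0; have ln_a_neq0 : ln a <> 0 by apply: ln_neq_0; lra.
rewrite /Rpower (_ : (t - ln e / ln a) * ln a = t * ln a + - ln e); last by field.
by rewrite exp_plus exp_Ropp exp_ln.
Qed.

Lemma exists_nat_floor (x : R) : 1 <= x -> exists N : nat, (0 < N)%nat /\ INR N <= x < INR N + 1.
Proof.
move=> x_ge1; have [up_gt up_le] := archimed x.
have up_gt1 : (1 < up x)%Z by apply: lt_IZR; lra.
have [N upE] : exists N, (up x - 1)%Z = Z.of_nat N by apply: IZN; lia.
exists N; rewrite INR_IZR_INZ -upE minus_IZR; split; [apply/ltP; lia | lra].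
Qed.

Lemma exists_Rpower_approx (p b c : nat) (alpha : R) : (1 < p)%nat ->
  INR b <= alpha -> alpha <= INR b + INR c ->
  exists N, [/\ (0 < N)%nat, (N <= expn p c)%nat,
    INR (expn p b * N) <= Rpower (INR p) alpha &
    Rpower (INR p) alpha <= 2 * INR (expn p b * N)].
Proof.
move=> p_gt1 b_le c_le; have {}p_gt1 : 1 < INR p by apply: (lt_INR 1); apply/ltP.
have Rpower_expn n : Rpower (INR p) (INR n) = INR (expn p n).
  by rewrite INR_expn Rpower_pow //; lra.
set x := Rpower (INR p) (alpha - INR b).
have x_ge1 : 1 <= x by rewrite /x -(Rpower_O (INR p)); [apply: Rle_Rpower | ]; lra.
have [N [N_gt0 [N_le N_gt]]] := exists_nat_floor x_ge1.
have alphaE : Rpower (INR p) alpha = INR (expn p b) * x.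
  by rewrite /x -Rpower_expn -Rpower_plus; congr Rpower; ring.
have pb_gt0 : 0 < INR (expn p b) by rewrite -Rpower_expn; apply: exp_pos.
have N_ge1 : 1 <= INR N by apply: (INR_leq N_gt0).
exists N; split => //; rewrite ?INR_muln ?alphaE; try nra.
apply/leP/INR_le; rewrite -Rpower_expn; apply: Rle_trans N_le _.
apply: Rle_Rpower; lra.
Qed.

End RealCounting.

Section ThinProjections.
Local Open Scope R_scope.
Variables (p k m c : nat) (C : seq 'M['F_p]_(k, m)) (E : {set 'rV['F_p]_(k + m)}).
Hypothesis C_low : low_energy c C.

Local Notation thin lam :=
  (count (fun A => Rleb (INR #|proj_cosets (graph_space A) E|) lam) C).

Lemma count_thin_markov lam : 0 <= lam ->
  INR (thin lam) * INR (#|E| * #|E|) <= lam * INR (\sum_(A <- C) graph_energy A E).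
Proof. by move=> lam_ge0; apply: count_Rleb_markov => // A; apply: card_sqr_le_proj_energy. Qed.

Lemma INR_low_energy :
  INR (expn p m) * INR (\sum_(A <- C) graph_energy A E) <=
  INR c * INR (size C) * (INR #|E| * INR #|E| + INR #|E| * INR (expn p m)).
Proof. by have := INR_leq (C_low E); rewrite !INR_muln INR_addn !INR_muln. Qed.

Lemma count_thin_small lam : (0 < #|E|)%nat -> (#|E| <= expn p m)%nat -> 0 <= lam ->
  INR (thin lam) <= 2 * INR c * INR (size C) * (lam / INR #|E|).
Proof.
move=> E_gt0 /INR_leq E_le lam_ge0.
have E_ge1 : 1 <= INR #|E| by apply: (INR_leq E_gt0).
have markov := count_thin_markov lam_ge0; have energy := INR_low_energy.
rewrite INR_muln in markov.
set T := INR (thin lam) in markov *; set X := INR (\sum_(A <- C) _) in markov energy.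
set e := INR #|E| in E_ge1 E_le markov energy *; set P := INR (expn p m) in E_le energy.
have [T_ge0 X_ge0] : 0 <= T /\ 0 <= X by split; apply: pos_INR.
have cS_ge0 : 0 <= INR c * INR (size C) by apply: Rmult_le_pos; apply: pos_INR.
have energy_le : INR c * INR (size C) * (e * e + e * P) <= INR c * INR (size C) * (2 * e * P).
  by apply: Rmult_le_compat_l => //; nra.
have X_le : X <= 2 * INR c * INR (size C) * e by apply: (Rmult_le_reg_l P); nra.
have Te_le : T * e <= 2 * INR c * INR (size C) * lam by apply: (Rmult_le_reg_r e); nra.
apply: (Rmult_le_reg_r e); first lra.
by rewrite (_ : _ * (lam / e) * e = 2 * INR c * INR (size C) * lam) //; field; lra.
Qed.

Lemma count_thin_large eps : (expn p m < #|E|)%nat -> 0 <= eps ->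
  INR (thin (eps * INR (expn p m))) <= 2 * INR c * INR (size C) * eps.
Proof.
move=> /ltP/lt_INR E_gt eps_ge0.
have P_ge0 := pos_INR (expn p m).
have markov := count_thin_markov (Rmult_le_pos _ _ eps_ge0 P_ge0).
have energy := INR_low_energy; rewrite INR_muln in markov.
set T := INR (thin _) in markov *; set X := INR (\sum_(A <- C) _) in markov energy.
set e := INR #|E| in E_gt markov energy *; set P := INR (expn p m) in E_gt P_ge0 markov energy.
have [T_ge0 X_ge0] : 0 <= T /\ 0 <= X by split; apply: pos_INR.
have cS_ge0 : 0 <= INR c * INR (size C) by apply: Rmult_le_pos; apply: pos_INR.
have energy_le : INR c * INR (size C) * (e * e + e * P) <= INR c * INR (size C) * (2 * (e * e)).
  by apply: Rmult_le_compat_l => //; nra.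
have PX_le : P * X <= 2 * INR c * INR (size C) * (e * e) by lra.
apply: (Rmult_le_reg_r (e * e)); first nra.
have := Rmult_le_compat_l _ _ _ eps_ge0 PX_le; nra.
Qed.

End ThinProjections.

Definition projection_family (n m : nat) (alpha C eps0 : R) (p : nat)
    (G : seq {vspace 'rV['F_p]_n}) : Prop :=
  uniq G /\
  (forall W, W \in G -> \dim W = (n - m)%N) /\
  (Rpower (INR p) alpha <= C * INR (size G))%R /\
  (INR (size G) <= C * Rpower (INR p) alpha)%R /\
  forall E : {set 'rV['F_p]_n},
    ((0 < #|E|)%N -> (#|E| <= expn p m)%N ->
      let s := (ln (INR #|E|) / ln (INR p))%R in
      forall t : R, (0 < t)%R -> (t <= s)%R ->
        (INR (count (fun W => Rleb (INR #|proj_cosets W E|) (Rpower (INR p) t)) G)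
           <= C * INR (size G) * Rpower (INR p) (t - s))%R) /\
    ((expn p m < #|E|)%N ->
      forall eps : R, (0 < eps)%R -> (eps <= eps0)%R ->
        (INR (count (fun W => Rleb (INR #|proj_cosets W E|) (eps * INR (expn p m))) G)
           <= C * INR (size G) * eps)%R).

Lemma graph_projection_family p k m c alpha (C : seq 'M['F_p]_(k, m)) :
  prime p -> uniq C -> low_energy c C -> (0 < c)%nat ->
  (INR (size C) <= Rpower (INR p) alpha <= 2 * INR (size C))%R ->
  projection_family m alpha (2 * INR c) 1 [seq graph_space A | A <- C].
Proof.
move=> p_pr uniq_C low_C c_gt0 [size_le size_ge].
have p_gt1 : (1 < INR p)%R by apply: (lt_INR 1); apply/ltP; apply: prime_gt1.
have c_ge1 : (1 <= INR c)%R by apply: (INR_leq c_gt0).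
have alpha_gt0 : (0 < Rpower (INR p) alpha)%R by apply: exp_pos.
have size_ge0 := pos_INR (size C).
(* [size_map] returns [size C] at a carrier of ['F_p] that is only convertible to the one above. *)
rewrite /projection_family size_map -[size _]/(size C).
split; first by rewrite map_inj_uniq //; apply: graph_space_inj.
split; first by move=> W /mapP [A _ ->]; rewrite dim_graph_space addnK.
split; first by have := Rmult_le_compat_r _ _ _ size_ge0 c_ge1; lra.
split; first by have := Rmult_le_compat_r _ _ _ (Rlt_le _ _ alpha_gt0) c_ge1; lra.
move=> E; split => [E_gt0 E_le t t_gt0 _ | E_gt eps eps_gt0 _]; rewrite count_map.
- have e_gt0 : (0 < INR #|E|)%R by apply: (lt_INR 0); apply/ltP.
  rewrite Rpower_sub_log //; apply: count_thin_small => //; apply: Rlt_le; apply: exp_pos.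
- by apply: count_thin_large => //; apply: Rlt_le.
Qed.

Lemma exists_low_energy_family p k' m' (alpha : R) : prime p ->
  (INR (minn k'.+1 m'.+1) < alpha)%R -> (alpha <= INR (k'.+1 * m'.+1))%R ->
  exists C : seq 'M['F_p]_(k'.+1, m'.+1),
    [/\ uniq C, low_energy (expn k'.+1 m'.+1 + expn m'.+1 k'.+1) C &
        (INR (size C) <= Rpower (INR p) alpha <= 2 * INR (size C))%R].
Proof.
move=> p_pr alpha_gt alpha_le.
have [m_le_alpha | alpha_lt_m] := Rle_lt_dec (INR m'.+1) alpha.
- have [|N [N_gt0 N_le size_le size_ge]] :=
    @exists_Rpower_approx p m'.+1 (k' * m'.+1) alpha (prime_gt1 p_pr) m_le_alpha.
    by rewrite -INR_addn -mulSn.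
  have [C [uniq_C size_C low_C]] := low_energy_direct_family p_pr N_gt0 N_le.
  by exists C; rewrite size_C.
- have k_lt_alpha : (INR k'.+1 < alpha)%R.
    by move: alpha_gt; case: leqP => // /ltP/lt_INR; lra.
  have [|N [N_gt0 N_le size_le size_ge]] :=
    @exists_Rpower_approx p k'.+1 (m' * k'.+1) alpha (prime_gt1 p_pr) (Rlt_le _ _ k_lt_alpha).
    by rewrite -INR_addn -mulSn mulnC.
  have [C [uniq_C size_C low_C]] := low_energy_dual_family p_pr N_gt0 N_le.
  by exists C; rewrite size_C.
Qed.

Theorem corollary1p4 (n m : nat) (alpha : R) :
  (2 <= n)%N -> (1 <= m)%N -> (m <= n - 1)%N ->
  (INR (minn m (n - m)) < alpha)%R -> (alpha <= INR (m * (n - m)))%R ->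
  exists C eps0 : R, (0 < C)%R /\ (0 < eps0)%R /\
  forall p : nat, prime p ->
  exists G : seq {vspace 'rV['F_p]_n},
    uniq G /\
    (forall W, W \in G -> \dim W = (n - m)%N) /\
    (Rpower (INR p) alpha <= C * INR (size G))%R /\
    (INR (size G) <= C * Rpower (INR p) alpha)%R /\
    forall E : {set 'rV['F_p]_n},
      ((0 < #|E|)%N -> (#|E| <= expn p m)%N ->
        let s := (ln (INR #|E|) / ln (INR p))%R in
        forall t : R, (0 < t)%R -> (t <= s)%R ->
          (INR (count (fun W => Rleb (INR #|proj_cosets W E|) (Rpower (INR p) t)) G)
             <= C * INR (size G) * Rpower (INR p) (t - s))%R) /\
      ((expn p m < #|E|)%N ->
        forall eps : R, (0 < eps)%R -> (eps <= eps0)%R ->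
          (INR (count (fun W => Rleb (INR #|proj_cosets W E|) (eps * INR (expn p m))) G)
             <= C * INR (size G) * eps)%R).
Proof.
move=> n_ge2 m_gt0 m_lt_n alpha_gt alpha_le.
have [m' mE] : exists m', m = m'.+1 by exists m.-1; rewrite prednK.
have [k' nE] : exists k', n = (k'.+1 + m)%nat by exists (n - m).-1; lia.
subst m n; rewrite addnK minnC mulnC in alpha_gt alpha_le.
set c := (expn k'.+1 m'.+1 + expn m'.+1 k'.+1)%nat.
have c_gt0 : (0 < c)%nat by rewrite addn_gt0 expn_gt0.
have c_ge1 : (1 <= INR c)%R by apply: (INR_leq c_gt0).
exists (2 * INR c)%R, 1%R; split; first lra.
split => [|p p_pr]; first lra.
have [C [uniq_C low_C size_C]] := exists_low_energy_family p_pr alpha_gt alpha_le.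
by exists [seq graph_space A | A <- C]; apply: graph_projection_family.
Qed.
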